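(* Let $K$ be a division ring and $G$ a group. If $a\in K[G]$ is one-sided invertible and of rank $2$, then $a$ is invertible. Furthermore, a rank $2$ element $a$ of $K[G]$ is invertible if and only if it is of the form $a=sh(1-rg)$ for some $s,r\in K\setminus\{0\}$ and $g,h\in G$, where $g$ has finite order $n>1$ and $r^n\ne1$; in that case $a^{-1}=(1-r^n)^{-1}(1+rg+r^2g^2+\dots+r^{n-1}g^{n-1})h^{-1}s^{-1}$.
   Context: $K[G]$ is the group ring (coefficients from $K$ commute with group elements). The rank of $a\in K[G]$ is the number of group elements with nonzero coefficient in $a$. *)

From HB Require Import structures.
From mathcomp Require Import all_boot all_order all_algebra.
From mathcomp Require Import monoid.
From mathcomp Require Import finmap.

Set Implicit Arguments.
Unset Strict Implicit.
Unset Printing Implicit Defensive.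

Import Order.TTheory GRing.Theory.
Local Open Scope fset_scope.
Local Open Scope ring_scope.

Definition is_division_ring (K : unitRingType) : Prop :=
  forall x : K, x != 0 -> x \is a GRing.unit.

Section GroupRing.
Variables (K : unitRingType) (G : groupType).

Definition KG := {fsfun G -> K with 0}.

Definition rank (a : KG) : nat := #|` finsupp a|.

Definition gr_single (c : K) (g : G) : KG := [fsfun x in [fset g] => c | 0].

Definition gr_zero : KG := [fsfun x in fset0 => (0 : K) | 0].
Definition gr_one : KG := gr_single 1 1%g.

Definition gr_add (a b : KG) : KG :=
  [fsfun x in finsupp a `|` finsupp b => a x + b x | 0].
Definition gr_opp (a : KG) : KG := [fsfun x in finsupp a => - a x | 0].
Definition gr_sub (a b : KG) : KG := gr_add a (gr_opp b).

(* Multiplication in K[G] (coefficients commute with group elements):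
   (a b)(x) = sum_g a(g) b(g^-1 x). *)
Definition gr_mul (a b : KG) : KG :=
  [fsfun x in [fset (g * h)%g | g in finsupp a, h in finsupp b] =>
     \sum_(g <- finsupp a) a g * b ((g^-1) * x)%g | 0].

Definition gr_sum (l : seq KG) : KG := foldr gr_add gr_zero l.

Definition is_inverse (a b : KG) : Prop :=
  gr_mul a b = gr_one /\ gr_mul b a = gr_one.

Definition invertible (a : KG) : Prop := exists b, is_inverse a b.

Definition one_sided_invertible (a : KG) : Prop :=
  exists b, gr_mul a b = gr_one \/ gr_mul b a = gr_one.

End GroupRing.

Definition has_order (G : groupType) (g : G) (n : nat) : Prop :=
  (0 < n)%N /\ (g ^+ n)%g = 1%g /\
  forall m : nat, (0 < m < n)%N -> (g ^+ m)%g <> 1%g.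

From HB Require Import structures.
From mathcomp Require Import all_boot all_order all_algebra.
From mathcomp Require Import monoid.
From mathcomp Require Import finmap.
From Stdlib Require Import Classical_Prop.

Set Implicit Arguments.
Unset Strict Implicit.
Unset Printing Implicit Defensive.
Import GRing.Theory.
Local Open Scope ring_scope.

(* A rank-2 element is s h (1 - r g) with s, r nonzero and g <> 1.  If b is a
   one-sided inverse, comparing coefficients shows that a translate f of b
   satisfies f y = [y = 1] d + r f(g^-1 y) with d <> 0, hence
   f(g^k) = r^k f(1) along the powers of g.  If g has infinite order, the
   finite support of b forces f(1) = f(g^-1) = 0, contradicting
   f(1) = d + r f(g^-1); if g has order n and r^n = 1, going once around the
   cycle gives f(1) = d + f(1).  Conversely, when g^n = 1 the truncated
   geometric series sum_(i < n) r^i g^i multiplied by 1 - r g on either side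
   telescopes to 1 - r^n, which gives the two-sided inverse. *)

Lemma big_uniq_common (T : eqType) (R : nmodType) (A B : seq T) (F : T -> R) :
  uniq A -> uniq B -> (forall x, x \notin A -> F x = 0) ->
  (forall x, x \notin B -> F x = 0) ->
  \sum_(x <- A) F x = \sum_(x <- B) F x.
Proof.
suff sub_sum C D : uniq C -> uniq D -> (forall x, x \notin D -> F x = 0) ->
    \sum_(x <- C) F x = \sum_(x <- [seq x <- C | x \in D]) F x.
  move=> uA uB FA FB; rewrite (sub_sum A B) // (sub_sum B A) //.
  by apply: perm_big; apply: uniq_perm; rewrite ?filter_uniq // => x;
    rewrite !mem_filter andbC.
move=> uC uD FD; rewrite big_filter [RHS]big_mkcond /=.
by apply: eq_bigr => x _; case: ifP => // /negbT /FD.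
Qed.

Lemma fsfun_dflt_along_inj (T : choiceType) (R : eqType) (x0 : R)
    (f : {fsfun T -> R with x0}) (p : nat -> T) :
  injective p -> exists k, f (p k) = x0.
Proof.
move=> p_inj; set N := size (enum_fset (finsupp f)).
case: (boolP (has (fun k => f (p k) == x0) (iota 0 N.+1))) => [/hasP[k _ /eqP]|].
  by exists k.
move/hasPn => in_supp; suff : (N.+1 <= N)%N by rewrite ltnn.
rewrite -[N.+1](size_iota 0) -(size_map p); apply: uniq_leq_size.
  by rewrite map_inj_uniq ?iota_uniq.
by move=> x /mapP[k k_in ->]; rewrite mem_finsupp; exact: in_supp.
Qed.

Section GroupOrder.
Variables (G : groupType) (g : G).

Lemma expg_inj : (forall m, (0 < m)%N -> (g ^+ m)%g != 1%g) ->
  injective (fun k => (g ^+ k)%g).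
Proof.
move=> no_order; suff lt_neq i j : (i < j)%N -> (g ^+ i)%g <> (g ^+ j)%g.
  by move=> i j e; case: (ltngtP i j) => // [/lt_neq|/lt_neq] //; rewrite e.
move=> ij e; have := no_order (j - i)%N; rewrite subn_gt0 => /(_ ij) /eqP; apply.
by apply: (@mulgI _ (g ^+ i)%g); rewrite -expgnDr subnKC ?(ltnW ij) // mulg1.
Qed.

Lemma has_order_exists : (exists n, (0 < n)%N && ((g ^+ n)%g == 1%g)) ->
  exists n, has_order g n.
Proof.
move=> ex_n; case: (ex_minnP ex_n) => n /andP[n_gt0 /eqP gn] n_min.
exists n; split=> //; split=> // m /andP[m_gt0 mn] /eqP gm.
by have := n_min m; rewrite m_gt0 gm leqNgt mn => /(_ isT).
Qed.

Lemma has_order_gt1 n : has_order g n -> (1 < n)%N = (g != 1%g).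
Proof.
case=> n_gt0 [gn n_min]; case: n n_gt0 gn n_min => [|[|n]] //= _.
  by rewrite expg1 => ->; rewrite eqxx.
by move=> _ /(_ 1%N isT); rewrite expg1 => /eqP.
Qed.
End GroupOrder.

Section Coefficients.
Variables (K : unitRingType) (G : groupType).
Implicit Types (a b : KG K G) (c : K) (x y : G).

Lemma gr_singleE c y x : gr_single c y x = if x == y then c else 0.
Proof. by rewrite /gr_single fsfunE in_fset1. Qed.

Lemma gr_oneE x : gr_one K G x = if x == 1%g then 1 else 0.
Proof. exact: gr_singleE. Qed.

Lemma gr_addE a b x : gr_add a b x = a x + b x.
Proof.
rewrite /gr_add fsfunE; case: ifP => // /negbT.
by rewrite in_fsetU negb_or => /andP[ha hb]; rewrite !fsfun_dflt // addr0.
Qed.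

Lemma gr_subE a b x : gr_sub a b x = a x - b x.
Proof.
rewrite /gr_sub gr_addE /gr_opp fsfunE; case: ifP => // /negbT ha.
by rewrite (fsfun_dflt ha) subr0 addr0.
Qed.

Lemma gr_sumE (l : seq (KG K G)) x : gr_sum l x = \sum_(a <- l) a x.
Proof.
elim: l => [|a l IH] /=; first by rewrite big_nil /gr_zero fsfunE.
by rewrite big_cons gr_addE IH.
Qed.

Lemma gr_mulE a b (A : seq G) x : uniq A -> {subset finsupp a <= A} ->
  gr_mul a b x = \sum_(g <- A) a g * b (g^-1 * x)%g.
Proof.
move=> uA sA; rewrite (@big_uniq_common _ _ A (finsupp a)) ?fset_uniq //;
  first last.
- by move=> g /fsfun_dflt ->; rewrite mul0r.
- by move=> g gA; rewrite fsfun_dflt ?mul0r //; apply: contra gA; apply: sA.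
rewrite /gr_mul fsfunE; case: ifP => // /negbT hx.
rewrite big1_seq // => g /andP[_ ag].
case: (boolP ((g^-1 * x)%g \in finsupp b)) => [bg|/fsfun_dflt ->]; last first.
  by rewrite mulr0.
case/negP: hx; apply/imfset2P; exists g => //; exists (g^-1 * x)%g => //.
by rewrite mulVKg.
Qed.

Lemma gr_mulEr a b (C : seq G) x : uniq C -> {subset finsupp b <= C} ->
  gr_mul a b x = \sum_(y <- C) a (x * y^-1)%g * b y.
Proof.
move=> uC sC; pose xV y := (x * y^-1)%g.
have xV_inj : injective xV by move=> y z /mulgI /invg_inj.
have xVK y : ((xV y)^-1 * x)%g = y by rewrite /xV invgM invgK mulgVK.
transitivity (\sum_(g <- map xV C) a g * b (g^-1 * x)%g); last first.
  by rewrite big_map; apply: eq_bigr => y _; rewrite xVK.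
rewrite (@gr_mulE _ _ (finsupp a)) ?fset_uniq //.
apply: big_uniq_common; rewrite ?fset_uniq ?map_inj_uniq //.
- by move=> g /fsfun_dflt ->; rewrite mul0r.
move=> g gC; case: (boolP ((g^-1 * x)%g \in finsupp b)) => [/sC bC|/fsfun_dflt ->].
  by case/mapP: gC; exists (g^-1 * x)%g; rewrite // /xV invgM invgK mulVKg.
by rewrite mulr0.
Qed.

Lemma gr_single_supp c y : {subset finsupp (gr_single c y) <= [:: y]}.
Proof.
by move=> x; rewrite mem_finsupp gr_singleE inE; case: (x =P y) => // _; rewrite eqxx.
Qed.

Lemma gr_single_mulE c y b x : gr_mul (gr_single c y) b x = c * b (y^-1 * x)%g.
Proof.
by rewrite (@gr_mulE _ _ [:: y]) ?big_seq1 ?gr_singleE ?eqxx //; apply: gr_single_supp.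
Qed.

Lemma gr_mul_singleE c y b x : gr_mul b (gr_single c y) x = b (x * y^-1)%g * c.
Proof.
by rewrite (@gr_mulEr _ _ [:: y]) ?big_seq1 ?gr_singleE ?eqxx //; apply: gr_single_supp.
Qed.

End Coefficients.

Section Geometric.
Variables (K : unitRingType) (G : groupType) (r : K) (g : G) (n : nat).

Definition gr_geom : KG K G :=
  gr_sum [seq gr_single (r ^+ i) (g ^+ i)%g | i <- iota 0 n].

Let term (z : G) (i : nat) : K := if z == (g ^+ i)%g then r ^+ i else 0.

Lemma gr_geomE z : gr_geom z = \sum_(i <- iota 0 n) term z i.
Proof. by rewrite gr_sumE big_map; apply: eq_bigr => i _; rewrite gr_singleE. Qed.

Hypothesis gn : (g ^+ n)%g = 1%g.

Let geom_telescope z :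
  gr_geom z - \sum_(i <- iota 0 n) term z i.+1 = if z == 1%g then 1 - r ^+ n else 0.
Proof.
have := telescope_sumr (term z) (leq0n n); rewrite /index_iota subn0 => tele.
rewrite gr_geomE -opprB -sumrB tele /term gn expg0 expr0.
by case: ifP; rewrite ?subrr ?oppr0 // opprB.
Qed.

Lemma gr_geom_mull z :
  gr_geom z - r * gr_geom (g^-1 * z)%g = if z == 1%g then 1 - r ^+ n else 0.
Proof.
rewrite -geom_telescope; congr (_ - _).
rewrite gr_geomE mulr_sumr; apply: eq_bigr => i _; rewrite /term.
have -> : ((g^-1 * z)%g == (g ^+ i)%g) = (z == (g ^+ i.+1)%g).
  by rewrite expgS; apply/eqP/eqP => [<-|->]; rewrite ?mulVKg ?mulKg.
by case: ifP; rewrite ?mulr0 // exprS.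
Qed.

Lemma gr_geom_mulr z :
  gr_geom z - gr_geom (z * g^-1)%g * r = if z == 1%g then 1 - r ^+ n else 0.
Proof.
rewrite -geom_telescope; congr (_ - _).
rewrite gr_geomE mulr_suml; apply: eq_bigr => i _; rewrite /term.
have -> : ((z * g^-1)%g == (g ^+ i)%g) = (z == (g ^+ i.+1)%g).
  by rewrite expgSr; apply/eqP/eqP => [<-|->]; rewrite ?mulgVK ?mulgK.
by case: ifP; rewrite ?mul0r // exprSr.
Qed.

End Geometric.

Section Binomial.
Variables (K : unitRingType) (G : groupType) (s r : K) (h g : G).
Hypothesis g_neq1 : g != 1%g.

Definition gr_binom : KG K G :=
  gr_mul (gr_single s h) (gr_sub (gr_one K G) (gr_single r g)).

Lemma gr_binomE x : gr_binom x =
  s * ((if (h^-1 * x)%g == 1%g then 1 else 0) - (if (h^-1 * x)%g == g then r else 0)).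
Proof. by rewrite gr_single_mulE gr_subE gr_oneE gr_singleE. Qed.

Let binom_h : gr_binom h = s.
Proof. by rewrite gr_binomE mulVg eqxx eq_sym (negbTE g_neq1) subr0 mulr1. Qed.

Let binom_hg : gr_binom (h * g)%g = - (s * r).
Proof. by rewrite gr_binomE mulKg (negbTE g_neq1) eqxx sub0r mulrN. Qed.

Let binom_supp : {subset finsupp gr_binom <= [:: h; h * g]%g}.
Proof.
move=> x; rewrite mem_finsupp gr_binomE !inE.
case: ((h^-1 * x)%g =P 1%g) => [e|_]; first by rewrite -(mulVKg h x) e mulg1 eqxx.
case: ((h^-1 * x)%g =P g) => [e|_]; first by rewrite -(mulVKg h x) e eqxx orbT.
by rewrite subrr mulr0 eqxx.
Qed.

Let binom_supp_uniq : uniq [:: h; h * g]%g.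
Proof.
by rewrite /= inE andbT -{1}(mulg1 h) (inj_eq (mulgI h)) eq_sym.
Qed.

Lemma gr_binom_mulE b x :
  gr_mul gr_binom b x = s * (b (h^-1 * x)%g - r * b (g^-1 * (h^-1 * x))%g).
Proof.
rewrite (gr_mulE _ _ binom_supp_uniq binom_supp) big_cons big_seq1.
by rewrite binom_h binom_hg invgM -mulgA mulrBr mulNr mulrA.
Qed.

Lemma gr_mul_binomE b x :
  gr_mul b gr_binom x = b (x * h^-1)%g * s - b (x * g^-1 * h^-1)%g * (s * r).
Proof.
rewrite (gr_mulEr _ _ binom_supp_uniq binom_supp) big_cons big_seq1.
by rewrite binom_h binom_hg invgM mulgA mulrN.
Qed.

End Binomial.

Definition gr_binom_inv (K : unitRingType) (G : groupType) (s r : K) (h g : G)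
    (n : nat) : KG K G :=
  gr_mul (gr_mul (gr_mul (gr_single (1 - r ^+ n)^-1 1%g) (gr_geom r g n))
                 (gr_single 1 (h^-1)%g))
         (gr_single s^-1 1%g).

Lemma gr_binom_is_inverse (K : unitRingType) (G : groupType) (s r : K) (h g : G)
    (n : nat) :
  s \is a GRing.unit -> 1 - r ^+ n \is a GRing.unit -> g != 1%g -> (g ^+ n)%g = 1%g ->
  is_inverse (gr_binom s r h g) (gr_binom_inv s r h g n).
Proof.
move=> s_unit rn_unit g_neq1 gn; set u := (1 - r ^+ n)^-1; set B := gr_binom_inv _ _ _ _ _.
have BE y : B y = u * gr_geom r g n (y * h)%g * s^-1.
  by rewrite /B /gr_binom_inv !gr_mul_singleE gr_single_mulE invg1 !mulg1 mul1g invgK mulr1.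
have ur : u * r = r * u.
  by symmetry; apply/commrV/commrB; [exact: commr1 | exact/commrX/commr_refl].
split; apply/fsfunP => x; rewrite gr_oneE.
- rewrite gr_binom_mulE // !BE -!mulgA; set z := (h^-1 * (x * h))%g.
  have -> : s * (u * gr_geom r g n z * s^-1 - r * (u * gr_geom r g n (g^-1 * z)%g * s^-1))
      = s * (u * (gr_geom r g n z - r * gr_geom r g n (g^-1 * z)%g)) * s^-1.
    by rewrite !mulrBr !mulrBl !mulrA -(mulrA s u r) ur mulrA.
  rewrite gr_geom_mull // -(conjg_eq1 x h) conjgE -/z.
  by case: ifP; rewrite ?mulr0 ?mul0r // mulVr ?mulr1 ?divrr.
- rewrite gr_mul_binomE // !BE !mulgVK.
  have -> : u * gr_geom r g n x * s^-1 * s - u * gr_geom r g n (x * g^-1)%g * s^-1 * (s * r)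
      = u * (gr_geom r g n x - gr_geom r g n (x * g^-1)%g * r).
    by rewrite mulrBr !mulrA !divrK.
  by rewrite gr_geom_mulr //; case: ifP; rewrite ?mulr0 // mulVr.
Qed.

(* A translate of a one-sided inverse of [gr_binom s r h g] satisfies [f_rec]
   with [step y = g^-1 * y] for a right inverse and [step y = y * g^-1] for a
   left inverse; only the action of [step] on the powers of g matters. *)
Section CyclicRecursion.
Variables (R : nzRingType) (G : groupType) (f : G -> R) (step : G -> G) (g : G) (r d : R).
Hypotheses (f_fin : forall p : nat -> G, injective p -> exists k, f (p k) = 0)
  (r_lreg : GRing.lreg r) (d_neq0 : d != 0)
  (f_rec : forall y, f y = (if y == 1%g then d else 0) + r * f (step y))
  (step_pow : forall k, step (g ^+ k.+1)%g = (g ^+ k)%g)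
  (step_invpow : forall k, step (g^-1 ^+ k)%g = (g^-1 ^+ k.+1)%g).

Let f_one : f 1%g = d + r * f g^-1%g.
Proof. by rewrite f_rec eqxx -(expg0 g^-1) step_invpow expg1. Qed.

Let f_pow k : (forall m, (0 < m <= k)%N -> (g ^+ m)%g != 1%g) ->
  f (g ^+ k)%g = r ^+ k * f 1%g.
Proof.
elim: k => [|k IH] no_order; first by rewrite mul1r.
have gk1 : (g ^+ k.+1)%g == 1%g = false by apply/negbTE/no_order; rewrite ltn0Sn leqnn.
rewrite f_rec step_pow gk1 add0r IH ?exprS ?mulrA // => m /andP[m_gt0 mk].
by apply: no_order; rewrite m_gt0 ltnW.
Qed.

Let f_invpow k : (forall m, (0 < m)%N -> (g ^+ m)%g != 1%g) ->
  f g^-1%g = r ^+ k * f (g^-1 ^+ k.+1)%g.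
Proof.
move=> no_order; elim: k => [|k ->]; first by rewrite mul1r expg1.
rewrite [f (g^-1 ^+ k.+1)%g]f_rec step_invpow expVgn invg_eq1.
by rewrite (negbTE (no_order _ _)) // add0r mulrA -exprSr.
Qed.

Let rec_finite_order : exists n, (0 < n)%N && ((g ^+ n)%g == 1%g).
Proof.
apply: NNPP => no_n; have no_order m : (0 < m)%N -> (g ^+ m)%g != 1%g.
  by move=> m_gt0; apply/negP => gm; apply: no_n; exists m; rewrite m_gt0.
have [k] := f_fin (expg_inj no_order).
rewrite f_pow => [/eqP|m /andP[/no_order //]].
rewrite mulrI_eq0 => [/eqP f1_eq0|]; last exact: lregX.
have invpow_inj : injective (fun k => (g^-1 ^+ k.+1)%g).
  by move=> i j; rewrite !expVgn => /invg_inj /(expg_inj no_order) [].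
have [j fj] := f_fin invpow_inj.
have fV_eq0 : f g^-1%g = 0 by rewrite (f_invpow j) // fj mulr0.
by move: d_neq0; have := f_one; rewrite f1_eq0 fV_eq0 mulr0 addr0 => <-; rewrite eqxx.
Qed.

Let rec_order_expr n : has_order g n -> r ^+ n != 1.
Proof.
case=> n_gt0 [gn n_min]; apply/eqP => rn.
have gV : g^-1%g = (g ^+ n.-1)%g by apply: mulg1_eq; rewrite -expgS prednK.
have := f_one; rewrite gV f_pow; last first.
  by move=> m /andP[m_gt0 mn]; apply/eqP/n_min; rewrite m_gt0 (leq_ltn_trans mn) ?ltn_predL.
rewrite mulrA -exprS prednK // rn mul1r => /eqP; rewrite -subr_eq subrr eq_sym.
by rewrite (negbTE d_neq0).
Qed.

Lemma cyclic_recursion_order : exists n, has_order g n /\ r ^+ n != 1.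
Proof.
have [n g_order] := has_order_exists rec_finite_order.
by exists n; split; last exact: rec_order_expr.
Qed.

End CyclicRecursion.

Lemma gr_binom_one_sided_order (K : unitRingType) (HK : is_division_ring K)
    (G : groupType) (s r : K) (h g : G) :
  s != 0 -> r != 0 -> g != 1%g -> one_sided_invertible (gr_binom s r h g) ->
  exists n, has_order g n /\ r ^+ n != 1.
Proof.
move=> s_neq0 r_neq0 g_neq1 [b [ab1|ba1]].
- pose f y := b (y * h^-1)%g.
  apply: (@cyclic_recursion_order K G f (fun y => g^-1 * y)%g g r s^-1).
  + by move=> p p_inj; apply: fsfun_dflt_along_inj => i j /mulIg /p_inj.
  + exact/mulrI/HK.
  + by rewrite invr_neq0.
  + move=> y; have := congr1 (fun a => fun_of_fsfun a (y ^ h^-1)%g) ab1.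
    rewrite /= gr_binom_mulE // gr_oneE conjg_eq1 conjgE invgK mulKg mulgA => E.
    rewrite -[f y](subrK (r * f (g^-1 * y)%g)) -[_ - _](mulKr (HK _ s_neq0)) [_ * (_ - _)]E.
    by case: ifP; rewrite ?mulr1 ?mulr0.
  + by move=> k; rewrite expgS mulKg.
  + by move=> k; rewrite expgS.
- (* In the converse ring the recursion [f y = [y = 1] + f (y g^-1) * r]
     has r acting on the left. *)
  pose f y : K^c := b (y * h^-1)%g * s.
  have [n [g_order rn]] : exists n, has_order g n /\ (r : K^c) ^+ n != 1.
    apply: (@cyclic_recursion_order K^c G f (fun y => y * g^-1)%g g r 1).
    + move=> p p_inj; have [k bk] : exists k, b (p k * h^-1)%g = 0.
        by apply: fsfun_dflt_along_inj => i j /mulIg /p_inj.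
      by exists k; rewrite /f bk mul0r.
    + by move=> x y; apply: (mulIr (HK _ r_neq0)).
    + exact: oner_neq0.
    + move=> y; have := congr1 (fun a => fun_of_fsfun a y) ba1.
      rewrite /= gr_mul_binomE // gr_oneE => E.
      change (b (y * h^-1)%g * s
        = (if y == 1%g then 1 else 0) + b (y * g^-1 * h^-1)%g * s * r :> K).
      by rewrite -E -mulrA subrK.
    + by move=> k; rewrite expgSr mulgK.
    + by move=> k; rewrite expgSr.
  by exists n; rewrite -revrX.
Qed.

Section RankTwo.
Variables (K : unitRingType) (G : groupType).
Hypothesis HK : is_division_ring K.

Let rank2_finsupp (a : KG K G) : rank a = 2%N ->
  exists h1 h2 : G, [/\ h1 != h2, a h1 != 0, a h2 != 0 &
     {subset finsupp a <= [:: h1; h2]}].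
Proof.
rewrite /rank => ra; have mem_enum x : (x \in finsupp a) = (x \in enum_fset (finsupp a)).
  by [].
move: ra mem_enum (fset_uniq (finsupp a)).
case: (enum_fset (finsupp a)) => [|h1 [|h2 []]] //= _ mem_enum /andP[].
rewrite inE => h12 _; exists h1, h2; split=> //.
- by move: (mem_enum h1); rewrite mem_finsupp !inE eqxx => ->.
- by move: (mem_enum h2); rewrite mem_finsupp !inE eqxx orbT => ->.
- by move=> x; rewrite mem_enum.
Qed.

Let gr_binom_of_finsupp2 (a : KG K G) (h1 h2 : G) :
  h1 != h2 -> a h1 != 0 -> {subset finsupp a <= [:: h1; h2]} ->
  a = gr_binom (a h1) (- ((a h1)^-1 * a h2)) h1 (h1^-1 * h2)%g.
Proof.
move=> h12 a1 sa; have u1 : a h1 \is a GRing.unit by apply: HK.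
have g_neq1 : (h1^-1 * h2)%g != 1%g.
  by apply: contra h12 => /eqP e; rewrite -(mulVKg h1 h2) e mulg1.
apply/fsfunP => x; rewrite gr_binomE.
case: (x =P h1) => [->|x_neq1].
  by rewrite mulVg eqxx eq_sym (negbTE g_neq1) subr0 mulr1.
case: (x =P h2) => [->|x_neq2]; first by rewrite (negbTE g_neq1) eqxx sub0r opprK mulVKr.
have -> : ((h1^-1 * x)%g == 1%g) = false.
  by apply/negP => /eqP e; apply: x_neq1; rewrite -(mulVKg h1 x) e mulg1.
have -> : ((h1^-1 * x)%g == (h1^-1 * h2)%g) = false by apply/negP => /eqP /mulgI.
rewrite subrr mulr0; apply/fsfun_dflt/negP => /sa; rewrite !inE.
by case/orP => /eqP.
Qed.

Lemma rank2_gr_binom (a : KG K G) : rank a = 2%N ->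
  exists (s r : K) (h g : G), [/\ s != 0, r != 0, g != 1%g & a = gr_binom s r h g].
Proof.
move=> /rank2_finsupp[h1 [h2 [h12 a1 a2 sa]]].
exists (a h1), (- ((a h1)^-1 * a h2)), h1, (h1^-1 * h2)%g; split=> //.
- by rewrite oppr_eq0 mulrI_eq0 //; apply/mulrI; rewrite unitrV; apply: HK.
- by apply: contra h12 => /eqP e; rewrite -(mulVKg h1 h2) e mulg1.
- exact: gr_binom_of_finsupp2.
Qed.

End RankTwo.

Theorem proposition2p2 (K : unitRingType) (HK : is_division_ring K)
    (G : groupType) :
  (forall a : KG K G, rank a = 2%N -> one_sided_invertible a -> invertible a)
  /\
  (forall a : KG K G, rank a = 2%N ->
     (invertible a <->
      exists (s r : K) (g h : G) (n : nat),
        [/\ s != 0, r != 0, (1 < n)%N, has_order g n & r ^+ n != 1] /\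
        a = gr_mul (gr_single s h) (gr_sub (gr_one K G) (gr_single r g))))
  /\
  (forall (a : KG K G) (s r : K) (g h : G) (n : nat),
     rank a = 2%N -> s != 0 -> r != 0 -> (1 < n)%N -> has_order g n ->
     r ^+ n != 1 ->
     a = gr_mul (gr_single s h) (gr_sub (gr_one K G) (gr_single r g)) ->
     is_inverse a
       (gr_mul
          (gr_mul
             (gr_mul (gr_single (1 - r ^+ n)^-1 1%g)
                (gr_sum [seq gr_single (r ^+ i) (g ^+ i)%g | i <- iota 0 n]))
             (gr_single 1 (h^-1)%g))
          (gr_single s^-1 1%g))).
Proof.
have binom_inverse (s r : K) (g h : G) n : s != 0 -> (1 < n)%N -> has_order g n ->
    r ^+ n != 1 -> is_inverse (gr_binom s r h g) (gr_binom_inv s r h g n).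
  move=> s_neq0 n_gt1 g_order rn_neq1; apply: gr_binom_is_inverse; first exact: HK.
  - by apply: HK; rewrite subr_eq0 eq_sym.
  - by rewrite -(has_order_gt1 g_order).
  - by case: g_order => _ [].
have one_sided_form (a : KG K G) : rank a = 2%N -> one_sided_invertible a ->
    exists (s r : K) (g h : G) (n : nat),
      [/\ s != 0, r != 0, (1 < n)%N, has_order g n & r ^+ n != 1] /\
      a = gr_binom s r h g.
  move=> /(rank2_gr_binom HK)[s [r [h [g [s_neq0 r_neq0 g_neq1 ->]]]]].
  case/(gr_binom_one_sided_order HK s_neq0 r_neq0 g_neq1) => n [g_order rn_neq1].
  by exists s, r, g, h, n; rewrite (has_order_gt1 g_order).
split; [|split].
- move=> a ra /(one_sided_form _ ra)[s [r [g [h [n [[s_neq0 _ n_gt1 g_order rn] ->]]]]]].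
  by eexists; apply: binom_inverse s_neq0 n_gt1 g_order rn.
- move=> a ra; split=> [[b [ab1 _]]|[s [r [g [h [n [[s_neq0 _ n_gt1 g_order rn] ->]]]]]]].
    by apply: one_sided_form ra _; exists b; left.
  by eexists; apply: binom_inverse s_neq0 n_gt1 g_order rn.
- move=> a s r g h n _ s_neq0 _ n_gt1 g_order rn ->.
  exact: binom_inverse s_neq0 n_gt1 g_order rn.
Qed.
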